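(* Let $g_1,g_2$ be holomorphic functions on a domain $\mathcal{D}\subset\mathbb{C}$ with $g_1'g_2'\neq 0$ on $\mathcal{D}$, let $\sqrt{g_1'g_2'}$ be a holomorphic branch of the square root on $\mathcal{D}$, and define $\Phi=(\phi_1,\phi_2,\phi_3,\phi_4):\mathcal{D}\to\mathbb{C}^4$ by $$\phi_1=\frac{\mathrm{i}}{2}\frac{g_1g_2+1}{\sqrt{g_1'g_2'}},\quad \phi_2=\frac12\frac{g_1g_2-1}{\sqrt{g_1'g_2'}},\quad \phi_3=\frac12\frac{g_1+g_2}{\sqrt{g_1'g_2'}},\quad \phi_4=\frac{\mathrm{i}}{2}\frac{g_1-g_2}{\sqrt{g_1'g_2'}}.$$ Let $\Psi$ be a holomorphic function on $\mathcal{D}$ with $\Psi'=\Phi$ and set $\mathrm{x}(u,v)=\operatorname{Re}\Psi(u+\mathrm{i}v)$. Then $\mathrm{x}$ defines a minimal surface of general type in $\mathbb{R}^4$, and $(u,v)$ are canonical coordinates of the first type on it.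
   Context: A minimal surface in $\mathbb{R}^4$ is a regular surface with zero mean curvature vector. With $E=\mathrm{x}_u^2$, $X_1=\mathrm{x}_u/\|\mathrm{x}_u\|$, $X_2=\mathrm{x}_v/\|\mathrm{x}_v\|$ and second fundamental form $\sigma$: a point is superconformal if $\sigma(X_1,X_1)\perp\sigma(X_1,X_2)$ and $\|\sigma(X_1,X_1)\|=\|\sigma(X_1,X_2)\|$ there; a minimal surface is of general type if it has no superconformal points. Isothermal coordinates $(u,v)$ ($E=G$, $F=0$) are canonical of the first type if $\sigma(X_1,X_1)\perp\sigma(X_1,X_2)$ and $E^2(\|\sigma(X_1,X_1)\|^2-\|\sigma(X_1,X_2)\|^2)=1$. *)

From Stdlib Require Import Reals.
From Coquelicot Require Import Coquelicot.
Open Scope R_scope.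

Definition is_C_deriv (f : C -> C) (z l : C) : Prop :=
  @is_derive C_AbsRing C_NormedModule f z l.

Definition holo_on (D : C -> Prop) (f : C -> C) : Prop :=
  forall z, D z -> exists l, is_C_deriv f z l.

Definition is_domain (D : C -> Prop) : Prop :=
  open D /\ (exists z, D z) /\
  (forall U V : C -> Prop, open U -> open V ->
     (forall z, D z -> U z \/ V z) ->
     (forall z, D z -> ~ (U z /\ V z)) ->
     (forall z, D z -> U z) \/ (forall z, D z -> V z)).

(* the Weierstrass-type data Phi = (phi_1,...,phi_4), indexed 0..3;
   s plays the role of the chosen branch of sqrt(g1' g2') *)
Definition Phi (g1 g2 s : C -> C) (k : nat) (z : C) : C :=
  match k with
  | 0%nat => (Ci / 2 * ((g1 z * g2 z + 1) / s z))%C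
  | 1%nat => (/ 2 * ((g1 z * g2 z - 1) / s z))%C
  | 2%nat => (/ 2 * ((g1 z + g2 z) / s z))%C
  | 3%nat => (Ci / 2 * ((g1 z - g2 z) / s z))%C
  | _ => 0%C
  end.

(* vectors of R^4 are functions nat -> R, only coordinates 0..3 matter *)
Definition vec4 := nat -> R.
Definition dot (a b : vec4) : R :=
  a 0%nat * b 0%nat + a 1%nat * b 1%nat + a 2%nat * b 2%nat + a 3%nat * b 3%nat.

Definition surf := R -> R -> vec4.

Definition xu (x : surf) (u v : R) : vec4 := fun k => Derive (fun t => x t v k) u.
Definition xv (x : surf) (u v : R) : vec4 := fun k => Derive (fun t => x u t k) v.
Definition xuu (x : surf) (u v : R) : vec4 := fun k => Derive (fun t => xu x t v k) u.
Definition xuv (x : surf) (u v : R) : vec4 := fun k => Derive (fun t => xu x u t k) v.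
Definition xvv (x : surf) (u v : R) : vec4 := fun k => Derive (fun t => xv x u t k) v.

Definition EE (x : surf) u v := dot (xu x u v) (xu x u v).
Definition FF (x : surf) u v := dot (xu x u v) (xv x u v).
Definition GG (x : surf) u v := dot (xv x u v) (xv x u v).

(* orthogonal projection onto the normal space (orthogonal complement of
   span{x_u, x_v}); tangential coefficients obtained from the Gram matrix *)
Definition nperp (x : surf) (u v : R) (w : vec4) : vec4 :=
  let E := EE x u v in let F := FF x u v in let G := GG x u v in
  let a := (G * dot w (xu x u v) - F * dot w (xv x u v)) / (E * G - F * F) in
  let b := (E * dot w (xv x u v) - F * dot w (xu x u v)) / (E * G - F * F) in
  fun k => w k - a * xu x u v k - b * xv x u v k.

(* second fundamental form on coordinate fields: sigma(d_i,d_j) = (x_ij)^perp *)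
Definition sig_uu x u v := nperp x u v (xuu x u v).
Definition sig_uv x u v := nperp x u v (xuv x u v).
Definition sig_vv x u v := nperp x u v (xvv x u v).

(* sigma(X1,X1), sigma(X1,X2) with X1 = x_u/|x_u|, X2 = x_v/|x_v| *)
Definition sigma11 (x : surf) u v : vec4 :=
  fun k => sig_uu x u v k / EE x u v.
Definition sigma12 (x : surf) u v : vec4 :=
  fun k => sig_uv x u v k / (sqrt (EE x u v) * sqrt (GG x u v)).

(* mean curvature vector H = 1/2 g^{ij} sigma(d_i,d_j) *)
Definition meanH (x : surf) u v : vec4 :=
  let E := EE x u v in let F := FF x u v in let G := GG x u v in
  fun k => / 2 * (G * sig_uu x u v k - 2 * F * sig_uv x u v k + E * sig_vv x u v k)
           / (E * G - F * F).

Definition regular_surface (x : surf) (U : R -> R -> Prop) : Prop :=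
  open (fun p : R * R => U (fst p) (snd p)) /\
  forall u v, U u v ->
    (forall k, (k < 4)%nat ->
       ex_derive (fun t => x t v k) u /\ ex_derive (fun t => x u t k) v /\
       ex_derive (fun t => xu x t v k) u /\ ex_derive (fun t => xu x u t k) v /\
       ex_derive (fun t => xv x t v k) u /\ ex_derive (fun t => xv x u t k) v) /\
    (forall a b : R,
       (forall k, (k < 4)%nat -> a * xu x u v k + b * xv x u v k = 0) ->
       a = 0 /\ b = 0).

Definition minimal_surface (x : surf) (U : R -> R -> Prop) : Prop :=
  regular_surface x U /\
  forall u v, U u v -> forall k, (k < 4)%nat -> meanH x u v k = 0.

Definition superconformal (x : surf) (u v : R) : Prop :=
  dot (sigma11 x u v) (sigma12 x u v) = 0 /\
  sqrt (dot (sigma11 x u v) (sigma11 x u v)) = sqrt (dot (sigma12 x u v) (sigma12 x u v)).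

Definition general_type (x : surf) (U : R -> R -> Prop) : Prop :=
  minimal_surface x U /\ forall u v, U u v -> ~ superconformal x u v.

Definition canonical_first_type (x : surf) (U : R -> R -> Prop) : Prop :=
  forall u v, U u v ->
    EE x u v = GG x u v /\ FF x u v = 0 /\
    dot (sigma11 x u v) (sigma12 x u v) = 0 /\
    EE x u v ^ 2 * (dot (sigma11 x u v) (sigma11 x u v)
                    - dot (sigma12 x u v) (sigma12 x u v)) = 1.

(* Write Φ = x_u - i x_v (by the Cauchy-Riemann equations this is the given
   Weierstrass datum Φ = Ψ') and Φ' = x_uu - i x_uv.  A direct computation
   gives, for the complex bilinear product on C^4, Φ·Φ = 0, Φ·Φ' = 0,
   Φ'·Φ' = g1' g2' / s^2 = 1, and Φ ≠ 0.  The real and imaginary parts of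
   Φ·Φ = 0 say E = G > 0 and F = 0, and x_vv = -x_uu makes the mean curvature
   vanish.  With E = G and F = 0, normal projection lowers the inner product
   of w and w' by ((w·x_u)(w'·x_u) + (w·x_v)(w'·x_v)) / E; by Φ·Φ' = 0 the
   tangential components of x_uv are those of x_uu rotated by a right angle,
   so these corrections cancel in σ(∂u,∂u)·σ(∂u,∂v) and in
   |σ(∂u,∂u)|^2 - |σ(∂u,∂v)|^2.  Hence Φ'·Φ' = 1 becomes <σ11, σ12> = 0 and
   E^2 (|σ11|^2 - |σ12|^2) = 1, which also rules out superconformal points. *)

From Stdlib Require Import Reals Lra Lia.
From Coquelicot Require Import Coquelicot.
Open Scope R_scope.

(** * Complex differentiation *)

Lemma is_C_deriv_const (c z : C) : is_C_deriv (fun _ => c) z 0%C.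
Proof. exact (is_derive_const c z). Qed.

Lemma is_C_deriv_plus (f g : C -> C) (z df dg : C) :
  is_C_deriv f z df -> is_C_deriv g z dg -> is_C_deriv (fun y => f y + g y)%C z (df + dg)%C.
Proof. exact (is_derive_plus f g z df dg). Qed.

Lemma is_C_deriv_minus (f g : C -> C) (z df dg : C) :
  is_C_deriv f z df -> is_C_deriv g z dg -> is_C_deriv (fun y => f y - g y)%C z (df - dg)%C.
Proof. exact (is_derive_minus f g z df dg). Qed.

Lemma is_C_deriv_mult (f g : C -> C) (z df dg : C) :
  is_C_deriv f z df -> is_C_deriv g z dg ->
  is_C_deriv (fun y => f y * g y)%C z (df * g z + f z * dg)%C.
Proof.
  intros [_ Hf] [_ Hg]. split; [apply is_linear_scal_l |].
  now destruct (is_derive_mult (K := C_AbsRing) f g z df dg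
    (conj (is_linear_scal_l _) Hf) (conj (is_linear_scal_l _) Hg) Cmult_comm).
Qed.

Lemma is_C_deriv_Cinv (y0 : C) : y0 <> 0%C -> is_C_deriv Cinv y0 (- / (y0 * y0))%C.
Proof.
  intros Hy0. split; [apply is_linear_scal_l |].
  intros x Hx.
  pose proof (is_filter_lim_locally_unique
    (K := C_AbsRing) (V := AbsRing_NormedModule C_AbsRing) y0 x Hx). subst x.
  intros eps.
  set (m := Cmod y0). assert (Hm : 0 < m) by now apply Cmod_gt_0.
  assert (Hdelta : 0 < Rmin (m / 2) (eps * m ^ 3 / 2)).
  { apply Rmin_pos; [lra |]. pose proof (cond_pos eps). pose proof (pow_lt m 3 Hm). nra. }
  exists (mkposreal _ Hdelta). intros y Hy.
  change (Cmod (y - y0)%C < Rmin (m / 2) (eps * m ^ 3 / 2)) in Hy.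
  change (Cmod ((/ y - / y0) - (y - y0) * (- / (y0 * y0)))%C <= eps * Cmod (y - y0)%C).
  set (h := Cmod (y - y0)%C) in *.
  pose proof (Rmin_l (m / 2) (eps * m ^ 3 / 2)). pose proof (Rmin_r (m / 2) (eps * m ^ 3 / 2)).
  assert (Hy_big : m / 2 <= Cmod y).
  { pose proof (Cmod_triangle y (y0 - y)%C) as T.
    replace (y + (y0 - y))%C with y0 in T by ring.
    rewrite <- Copp_minus_distr, Cmod_opp in T. fold m h in T. lra. }
  assert (Hy_nz : (y : C) <> 0%C) by (intro E; rewrite E, Cmod_0 in Hy_big; lra).
  (* the remainder is h^2 / (|y| m^2) and |y| >= m / 2, so it is at most (2 h / m^3) h *)
  replace ((/ y - / y0) - (y - y0) * (- / (y0 * y0)))%C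
    with ((y - y0) * (y - y0) / (y * y0 * y0))%C by (field; auto).
  rewrite Cmod_div, !Cmod_mult by (repeat apply Cmult_neq_0; auto). fold h m.
  assert (0 <= h) by apply Cmod_ge_0.
  assert (Hm3 : 0 < m ^ 3) by (apply pow_lt; lra).
  apply Rle_trans with (h * h / (m / 2 * m * m)).
  - apply Rmult_le_compat_l; [nra |].
    apply Rinv_le_contravar; [apply Rmult_lt_0_compat; nra |].
    apply Rmult_le_compat_r; [lra |]. apply Rmult_le_compat_r; lra.
  - replace (h * h / (m / 2 * m * m)) with (h * (2 * h / m ^ 3)) by (field; lra).
    rewrite (Rmult_comm eps). apply Rmult_le_compat_l; [lra |].
    apply Rle_trans with (2 * (eps * m ^ 3 / 2) / m ^ 3); [| right; field; lra].
    apply Rmult_le_compat_r; [left; apply Rinv_0_lt_compat |]; lra.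
Qed.

Lemma is_C_deriv_inv (f : C -> C) (z df : C) : is_C_deriv f z df -> f z <> 0%C ->
  is_C_deriv (fun y => / f y)%C z (- df / (f z * f z))%C.
Proof.
  intros [_ Hf] Hz.
  pose proof (is_derive_comp Cinv f z _ df (is_C_deriv_Cinv _ Hz) (conj (is_linear_scal_l _) Hf)) as H.
  replace (- df / (f z * f z))%C with (df * - / (f z * f z))%C by (field; exact Hz).
  exact H.
Qed.

Lemma is_C_deriv_div (f g : C -> C) (z df dg : C) :
  is_C_deriv f z df -> is_C_deriv g z dg -> g z <> 0%C ->
  is_C_deriv (fun y => f y / g y)%C z ((df * g z - f z * dg) / (g z * g z))%C.
Proof.
  intros Hf Hg Hz.
  pose proof (is_C_deriv_mult _ _ _ _ _ Hf (is_C_deriv_inv _ _ _ Hg Hz)) as H.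
  replace ((df * g z - f z * dg) / (g z * g z))%C
    with (df * / g z + f z * (- dg / (g z * g z)))%C by (field; exact Hz).
  exact H.
Qed.

Lemma is_C_deriv_scal (c : C) (f : C -> C) (z df : C) :
  is_C_deriv f z df -> is_C_deriv (fun y => c * f y)%C z (c * df)%C.
Proof.
  intros Hf. pose proof (is_C_deriv_mult _ _ _ _ _ (is_C_deriv_const c z) Hf) as H.
  replace (c * df)%C with (0 * f z + c * df)%C by ring. exact H.
Qed.

Lemma holo_on_deriv (D : C -> Prop) (f : C -> C) (z : C) :
  holo_on D f -> D z -> is_C_deriv f z (C_derive f z).
Proof.
  intros Hf Hz. destruct (Hf z Hz) as [l Hl].
  now rewrite (is_C_derive_unique f z l Hl).
Qed.

(** * Cauchy-Riemann equations *)

Lemma norm_C_R (w : C) : @norm R_AbsRing C_R_NormedModule w = Cmod w.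
Proof.
  destruct w as [a b].
  change (sqrt (Rabs a ^ 2 + Rabs b ^ 2) = sqrt (a ^ 2 + b ^ 2)).
  now rewrite <- !Rsqr_pow2, <- !Rsqr_abs.
Qed.

Lemma is_C_deriv_filterdiff_R (f : C -> C) (z l : C) :
  is_C_deriv f z l ->
  @filterdiff R_AbsRing C_R_NormedModule C_R_NormedModule f (locally z) (fun h => (h * l)%C).
Proof.
  intros [_ Hf]. split.
  - apply Build_is_linear.
    + intros h h'. apply Cmult_plus_distr_r.
    + intros r h. rewrite !scal_R_Cmult. symmetry. apply Cmult_assoc.
    + exists (Cmod l + 1). split; [pose proof (Cmod_ge_0 l); lra |].
      intros h. rewrite !norm_C_R, Cmod_mult. pose proof (Cmod_ge_0 h). nra.
  - intros x Hx. apply (is_filter_lim_locally_unique (V := C_R_NormedModule)) in Hx. subst x.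
    intros eps. apply locally_C.
    eapply filter_imp; [| exact (Hf z (fun P HP => HP) eps)]. intros y Hy.
    rewrite !norm_C_R. exact Hy.
Qed.

Lemma is_derive_C_comp (f : C -> C) (p : R -> C) (t : R) (l dp : C) :
  is_C_deriv f (p t) l -> @is_derive R_AbsRing C_R_NormedModule p t dp ->
  @is_derive R_AbsRing C_R_NormedModule (fun r => f (p r)) t (dp * l)%C.
Proof.
  intros Hf Hp. eapply filterdiff_ext_lin.
  - exact (filterdiff_comp' p f t _ _ Hp (is_C_deriv_filterdiff_R f (p t) l Hf)).
  - intros r. rewrite !scal_R_Cmult. symmetry. apply Cmult_assoc.
Qed.

Lemma is_derive_Re (g : R -> C) (t : R) (dg : C) :
  @is_derive R_AbsRing C_R_NormedModule g t dg -> is_derive (fun r => Re (g r)) t (Re dg).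
Proof.
  intros Hg. eapply filterdiff_ext_lin.
  - exact (filterdiff_comp' g Re t _ _ Hg (filterdiff_linear _ is_linear_fst)).
  - reflexivity.
Qed.

Lemma is_derive_Im (g : R -> C) (t : R) (dg : C) :
  @is_derive R_AbsRing C_R_NormedModule g t dg -> is_derive (fun r => Im (g r)) t (Im dg).
Proof.
  intros Hg. eapply filterdiff_ext_lin.
  - exact (filterdiff_comp' g Im t _ _ Hg (filterdiff_linear _ is_linear_snd)).
  - reflexivity.
Qed.

Lemma is_derive_C_affine (c d : C) (t0 : R) :
  @is_derive R_AbsRing C_R_NormedModule (fun t : R => (c + t * d)%C) t0 d.
Proof.
  pose proof (is_derive_plus _ _ t0 _ _
    (is_derive_scal_l (V := C_R_NormedModule) (fun t => t) t0 one d (is_derive_id t0))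
    (is_derive_const (K := R_AbsRing) (V := C_R_NormedModule) c t0)) as H.
  rewrite scal_one, plus_zero_r in H.
  eapply is_derive_ext; [| exact H]. intros t. simpl. rewrite scal_R_Cmult. apply Cplus_comm.
Qed.

Lemma is_derive_C_horizontal (u v : R) :
  @is_derive R_AbsRing C_R_NormedModule (fun t : R => (t, v) : C) u (RtoC 1).
Proof.
  eapply is_derive_ext; [| apply (is_derive_C_affine (0, v))].
  intros t. apply injective_projections; simpl; ring.
Qed.

Lemma is_derive_C_vertical (u v : R) :
  @is_derive R_AbsRing C_R_NormedModule (fun t : R => (u, t) : C) v Ci.
Proof.
  eapply is_derive_ext; [| apply (is_derive_C_affine (u, 0))].
  intros t. apply injective_projections; simpl; ring.
Qed.

Lemma is_C_deriv_partial_u (f : C -> C) (u v : R) (l : C) : is_C_deriv f (u, v) l ->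
  is_derive (fun t => Re (f (t, v))) u (Re l) /\ is_derive (fun t => Im (f (t, v))) u (Im l).
Proof.
  intros Hf.
  pose proof (is_derive_C_comp f (fun t => (t, v)) u l _ Hf (is_derive_C_horizontal u v)) as H.
  rewrite Cmult_1_l in H. split; [apply is_derive_Re | apply is_derive_Im]; exact H.
Qed.

Lemma is_C_deriv_partial_v (f : C -> C) (u v : R) (l : C) : is_C_deriv f (u, v) l ->
  is_derive (fun t => Re (f (u, t))) v (- Im l) /\ is_derive (fun t => Im (f (u, t))) v (Re l).
Proof.
  intros Hf.
  pose proof (is_derive_C_comp f (fun t => (u, t)) v l _ Hf (is_derive_C_vertical u v)) as H.
  replace (- Im l) with (Re (Ci * l)) by (destruct l; simpl; ring).
  replace (Re l) with (Im (Ci * l)) by (destruct l; simpl; ring).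
  split; [apply is_derive_Re | apply is_derive_Im]; exact H.
Qed.

Lemma open_C_slices (D : C -> Prop) (u v : R) : open D -> D (u, v) ->
  locally u (fun t => D (t, v)) /\ locally v (fun t => D (u, t)).
Proof.
  intros HD Huv. destruct (HD (u, v) Huv) as [eps He]. split.
  - exists eps. intros t Ht. apply He. split; [exact Ht | apply ball_center].
  - exists eps. intros t Ht. apply He. split; [apply ball_center | exact Ht].
Qed.

Lemma dot_sym (p q : vec4) : dot p q = dot q p.
Proof. unfold dot. ring. Qed.

Lemma dot_ext (p q p' q' : vec4) :
  (forall k, (k < 4)%nat -> p k = p' k) -> (forall k, (k < 4)%nat -> q k = q' k) ->
  dot p q = dot p' q'.
Proof. intros Hp Hq. unfold dot. rewrite !Hp, !Hq by lia. reflexivity. Qed.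

Lemma dot_opp_l (p q : vec4) : dot (fun k => - p k) q = - dot p q.
Proof. unfold dot. ring. Qed.

Lemma dot_comb_l (p q r w : vec4) (a b : R) :
  dot (fun k => p k - a * q k - b * r k) w = dot p w - a * dot q w - b * dot r w.
Proof. unfold dot. ring. Qed.

Lemma dot_div (p q : vec4) (a b : R) : a <> 0 -> b <> 0 ->
  dot (fun k => p k / a) (fun k => q k / b) = dot p q / (a * b).
Proof. intros Ha Hb. unfold dot. field. auto. Qed.

Lemma dot_normal_part (p q w1 w2 : vec4) (e : R) :
  dot p p = e -> dot q q = e -> dot p q = 0 -> e <> 0 ->
  dot (fun k => w1 k - dot w1 p / e * p k - dot w1 q / e * q k)
      (fun k => w2 k - dot w2 p / e * p k - dot w2 q / e * q k)
  = dot w1 w2 - dot w1 p * dot w2 p / e - dot w1 q * dot w2 q / e.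
Proof.
  intros Hpp Hqq Hpq He.
  rewrite dot_comb_l, !(dot_sym _ (fun k => w2 k - _ - _)), !dot_comb_l.
  rewrite (dot_sym w2 w1), (dot_sym p w1), (dot_sym q w1), (dot_sym q p), Hpp, Hqq, Hpq.
  field. exact He.
Qed.

Definition cdot (p q : nat -> C) : C :=
  (p 0%nat * q 0%nat + p 1%nat * q 1%nat + p 2%nat * q 2%nat + p 3%nat * q 3%nat)%C.

Lemma cdot_ext (p q p' q' : nat -> C) :
  (forall k, (k < 4)%nat -> p k = p' k) -> (forall k, (k < 4)%nat -> q k = q' k) ->
  cdot p q = cdot p' q'.
Proof. intros Hp Hq. unfold cdot. rewrite !Hp, !Hq by lia. reflexivity. Qed.

Lemma cdot_pairs (a b c d : vec4) :
  cdot (fun k => (a k, - b k)) (fun k => (c k, - d k)) = (dot a c - dot b d, - (dot a d + dot b c)).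
Proof. apply injective_projections; unfold cdot, dot; simpl; ring. Qed.

Lemma nperp_opp (x : surf) (u v : R) (w w' : vec4) :
  (forall k, (k < 4)%nat -> w' k = - w k) ->
  forall k, (k < 4)%nat -> nperp x u v w' k = - nperp x u v w k.
Proof.
  intros Hw k Hk. unfold nperp.
  rewrite !(dot_ext w' _ (fun k => - w k) _ Hw (fun _ _ => eq_refl)), !dot_opp_l, Hw by exact Hk.
  unfold Rdiv. ring.
Qed.

Section Conformal_projection.

Variables (x : surf) (u v e : R).
Local Notation U := (xu x u v).
Local Notation V := (xv x u v).
Hypotheses (HE : EE x u v = e) (HG : GG x u v = e) (HF : FF x u v = 0) (He : e <> 0).

Lemma nperp_conformal (w : vec4) (k : nat) :
  nperp x u v w k = w k - dot w U / e * U k - dot w V / e * V k.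
Proof. unfold nperp. rewrite HE, HG, HF. field. exact He. Qed.

Lemma dot_nperp_conformal (w1 w2 : vec4) :
  dot (nperp x u v w1) (nperp x u v w2) = dot w1 w2 - dot w1 U * dot w2 U / e - dot w1 V * dot w2 V / e.
Proof.
  rewrite <- dot_normal_part with (p := U) (q := V) by assumption.
  apply dot_ext; intros; apply nperp_conformal.
Qed.

End Conformal_projection.

(** * Points where the Weierstrass data are normalized *)

(* [xz x] is x_u - i x_v = 2 dx/dz and [xzu x] is its u-derivative x_uu - i x_uv;
   [xvv = - xuu] is harmonicity. *)
Definition xz (x : surf) (u v : R) : nat -> C := fun k => (xu x u v k, - xv x u v k).
Definition xzu (x : surf) (u v : R) : nat -> C := fun k => (xuu x u v k, - xuv x u v k).

Definition normalized_at (x : surf) (u v : R) : Prop :=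
  cdot (xz x u v) (xz x u v) = 0%C /\
  (exists k, (k < 4)%nat /\ xz x u v k <> 0%C) /\
  cdot (xz x u v) (xzu x u v) = 0%C /\
  cdot (xzu x u v) (xzu x u v) = 1%C /\
  (forall k, (k < 4)%nat -> xvv x u v k = - xuu x u v k).

Section Normalized_point.

Variables (x : surf) (u v : R).
Hypothesis Hx : normalized_at x u v.
Local Notation U := (xu x u v).
Local Notation V := (xv x u v).
Local Notation Wuu := (xuu x u v).
Local Notation Wuv := (xuv x u v).

Lemma normalized_conformal : EE x u v = GG x u v /\ FF x u v = 0.
Proof.
  destruct Hx as [Hiso _].
  unfold xz in Hiso. rewrite (cdot_pairs U V U V) in Hiso.
  apply pair_equal_spec in Hiso as [H1 H2].
  rewrite (dot_sym V U) in H2. unfold EE, GG, FF. split; lra.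
Qed.

Lemma normalized_EE_pos : 0 < EE x u v.
Proof.
  destruct Hx as [_ [[k [Hk Hnz]] _]].
  destruct normalized_conformal as [HEG _]. unfold EE, GG in *.
  assert (Hc : U k <> 0 \/ V k <> 0).
  { destruct (Req_dec (U k) 0) as [H0 | H0]; [right | now left].
    intros H1. apply Hnz. unfold xz. rewrite H0, H1.
    apply injective_projections; simpl; ring. }
  assert (0 < dot U U + dot V V) by (unfold dot; destruct k as [|[|[|[|k]]]]; [nra .. | lia]).
  lra.
Qed.

Lemma normalized_second_order :
  dot U Wuu = dot V Wuv /\ dot U Wuv = - dot V Wuu /\
  dot Wuu Wuu - dot Wuv Wuv = 1 /\ dot Wuu Wuv = 0.
Proof.
  destruct Hx as [_ [_ [Horth [Hunit _]]]].
  unfold xz, xzu in Horth, Hunit.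
  rewrite (cdot_pairs U V Wuu Wuv) in Horth. rewrite (cdot_pairs Wuu Wuv Wuu Wuv) in Hunit.
  apply pair_equal_spec in Horth as [H1 H2]. apply pair_equal_spec in Hunit as [H3 H4].
  rewrite (dot_sym Wuv Wuu) in H4. lra.
Qed.

Local Notation E := (EE x u v).

Lemma normalized_independent (al be : R) :
  (forall k, (k < 4)%nat -> al * U k + be * V k = 0) -> al = 0 /\ be = 0.
Proof.
  intros H. pose proof normalized_EE_pos as HE.
  destruct normalized_conformal as [HUU HUV]. unfold EE, GG, FF in *.
  assert (HU : al * dot U U + be * dot U V = 0).
  { transitivity (dot U (fun k => al * U k + be * V k)); [unfold dot; ring |].
    unfold dot. rewrite !H by lia. ring. }
  assert (HV : al * dot U V + be * dot V V = 0).
  { transitivity (dot V (fun k => al * U k + be * V k)); [unfold dot; ring |].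
    unfold dot. rewrite !H by lia. ring. }
  rewrite HUV in HU, HV. rewrite <- HUU in HV. split; nra.
Qed.

Lemma normalized_meanH (k : nat) : (k < 4)%nat -> meanH x u v k = 0.
Proof.
  intros Hk. destruct Hx as [_ [_ [_ [_ Hharm]]]].
  pose proof normalized_EE_pos.
  unfold meanH. rewrite <- (proj1 normalized_conformal), (proj2 normalized_conformal).
  unfold sig_uu, sig_vv. rewrite (nperp_opp x u v _ _ Hharm k Hk).
  field. lra.
Qed.

Lemma normalized_sigma_scaling :
  dot (sigma11 x u v) (sigma12 x u v) = dot (sig_uu x u v) (sig_uv x u v) / (E * E) /\
  dot (sigma11 x u v) (sigma11 x u v) = dot (sig_uu x u v) (sig_uu x u v) / (E * E) /\
  dot (sigma12 x u v) (sigma12 x u v) = dot (sig_uv x u v) (sig_uv x u v) / (E * E).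
Proof.
  pose proof normalized_EE_pos.
  assert (Hsq : sqrt E * sqrt (GG x u v) = E).
  { rewrite <- (proj1 normalized_conformal). apply sqrt_sqrt. lra. }
  unfold sigma11, sigma12. rewrite Hsq, !dot_div by lra. auto.
Qed.

Lemma normalized_sig_uu_sig_uv :
  dot (sig_uu x u v) (sig_uv x u v) = 0 /\
  dot (sig_uu x u v) (sig_uu x u v) - dot (sig_uv x u v) (sig_uv x u v) = 1.
Proof.
  pose proof normalized_EE_pos as HE.
  destruct normalized_second_order as [H1 [H2 [H3 H4]]].
  unfold sig_uu, sig_uv.
  destruct normalized_conformal as [HEG HF].
  rewrite !(dot_nperp_conformal x u v E) by (auto; lra).
  rewrite (dot_sym Wuu U), (dot_sym Wuu V), (dot_sym Wuv U), (dot_sym Wuv V), H1, H2, H4.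
  split.
  - field. lra.
  - replace (dot Wuu Wuu) with (1 + dot Wuv Wuv) by lra. field. lra.
Qed.

Lemma normalized_sigma_orth : dot (sigma11 x u v) (sigma12 x u v) = 0.
Proof.
  rewrite (proj1 normalized_sigma_scaling), (proj1 normalized_sig_uu_sig_uv). unfold Rdiv. ring.
Qed.

Lemma normalized_sigma_gap :
  E ^ 2 * (dot (sigma11 x u v) (sigma11 x u v) - dot (sigma12 x u v) (sigma12 x u v)) = 1.
Proof.
  pose proof normalized_EE_pos.
  destruct normalized_sigma_scaling as [_ [-> ->]].
  rewrite <- (proj2 normalized_sig_uu_sig_uv). field. lra.
Qed.

Lemma normalized_not_superconformal : ~ superconformal x u v.
Proof.
  intros [_ Hs]. apply sqrt_inj in Hs; try (unfold dot; nra).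
  pose proof normalized_sigma_gap as Hgap. rewrite Hs, Rminus_diag, Rmult_0_r in Hgap. lra.
Qed.

End Normalized_point.

Lemma Ci_sqr : (Ci ^ 2 = - 1)%C.
Proof. apply injective_projections; simpl; ring. Qed.

Lemma two_neq0 : (2 : C) <> 0%C.
Proof. intro H. apply (f_equal Re) in H. simpl in H. lra. Qed.

Lemma cdot_Phi_Phi (g1 g2 s : C -> C) (z : C) : s z <> 0%C ->
  cdot (fun k => Phi g1 g2 s k z) (fun k => Phi g1 g2 s k z) = 0%C.
Proof.
  intros Hs. pose proof two_neq0. unfold cdot, Phi.
  field_simplify_eq; [rewrite Ci_sqr; ring | auto].
Qed.

Lemma Phi_neq0 (g1 g2 s : C -> C) (z : C) : s z <> 0%C ->
  exists k, (k < 4)%nat /\ Phi g1 g2 s k z <> 0%C.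
Proof.
  intros Hs. destruct (Ceq_dec (Phi g1 g2 s 0 z) 0) as [H0 | H0];
    [| now exists 0%nat; split; [lia |]].
  exists 1%nat. split; [lia |]. intros H1. apply C1_nz.
  (* - s (i φ_1 + φ_2) = ((g1 g2 + 1) - (g1 g2 - 1)) / 2 = 1 *)
  transitivity (- s z * (Ci * Phi g1 g2 s 0 z + Phi g1 g2 s 1 z))%C.
  - unfold Phi. field_simplify_eq; [rewrite Ci_sqr; ring | auto].
  - rewrite H0, H1. ring.
Qed.

Definition dPhi (g1 g2 s : C -> C) (k : nat) (z : C) : C :=
  let g1' := C_derive g1 z in let g2' := C_derive g2 z in let s' := C_derive s z in
  match k with
  | 0%nat =>
      (Ci / 2 * (((g1' * g2 z + g1 z * g2') * s z - (g1 z * g2 z + 1) * s') / (s z * s z)))%C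
  | 1%nat =>
      (/ 2 * (((g1' * g2 z + g1 z * g2') * s z - (g1 z * g2 z - 1) * s') / (s z * s z)))%C
  | 2%nat => (/ 2 * (((g1' + g2') * s z - (g1 z + g2 z) * s') / (s z * s z)))%C
  | 3%nat => (Ci / 2 * (((g1' - g2') * s z - (g1 z - g2 z) * s') / (s z * s z)))%C
  | _ => 0%C
  end.

Lemma cdot_Phi_dPhi (g1 g2 s : C -> C) (z : C) : s z <> 0%C ->
  cdot (fun k => Phi g1 g2 s k z) (fun k => dPhi g1 g2 s k z) = 0%C.
Proof.
  intros Hs. pose proof two_neq0. unfold cdot, Phi, dPhi.
  field_simplify_eq; [rewrite Ci_sqr; ring | auto].
Qed.

Lemma cdot_dPhi_dPhi (g1 g2 s : C -> C) (z : C) : s z <> 0%C ->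
  (s z * s z = C_derive g1 z * C_derive g2 z)%C ->
  cdot (fun k => dPhi g1 g2 s k z) (fun k => dPhi g1 g2 s k z) = 1%C.
Proof.
  intros Hs Hss. pose proof two_neq0. unfold cdot, dPhi.
  field_simplify_eq; [rewrite Ci_sqr | auto].
  transitivity (4 * (C_derive g1 z * C_derive g2 z) * s z ^ 2)%C; [ring |].
  rewrite <- Hss. ring.
Qed.

(** * The surface of a Weierstrass representation *)

Section Weierstrass_representation.

Variables (D : C -> Prop) (g1 g2 s : C -> C) (Psi : nat -> C -> C).
Hypothesis D_open : open D.
Hypotheses (g1_holo : holo_on D g1) (g2_holo : holo_on D g2) (s_holo : holo_on D s).
Hypothesis g12_neq0 : forall z, D z -> (C_derive g1 z * C_derive g2 z)%C <> 0%C.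
Hypothesis s_sqr : forall z, D z -> (s z * s z)%C = (C_derive g1 z * C_derive g2 z)%C.
Hypothesis Psi_primitive :
  forall k z, (k < 4)%nat -> D z -> is_C_deriv (Psi k) z (Phi g1 g2 s k z).

Local Notation x := (fun u v k => Re (Psi k (u, v))).

Lemma s_neq0 (z : C) : D z -> s z <> 0%C.
Proof. intros Hz Hs. apply (g12_neq0 z Hz). rewrite <- (s_sqr z Hz), Hs. ring. Qed.

Lemma is_C_deriv_Phi (k : nat) (z : C) : (k < 4)%nat -> D z ->
  is_C_deriv (Phi g1 g2 s k) z (dPhi g1 g2 s k z).
Proof.
  intros Hk Hz.
  pose proof (holo_on_deriv D g1 z g1_holo Hz) as Hg1.
  pose proof (holo_on_deriv D g2 z g2_holo Hz) as Hg2.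
  pose proof (holo_on_deriv D s z s_holo Hz) as Hs.
  destruct k as [|[|[|[|k]]]]; [| | | | lia]; unfold Phi, dPhi; cbv beta iota zeta.
  - apply is_C_deriv_scal, (is_C_deriv_div (fun y => g1 y * g2 y + 1)%C); auto using s_neq0.
    replace (C_derive g1 z * g2 z + g1 z * C_derive g2 z)%C
      with (C_derive g1 z * g2 z + g1 z * C_derive g2 z + 0)%C by ring.
    apply is_C_deriv_plus; [apply is_C_deriv_mult | apply is_C_deriv_const]; assumption.
  - apply is_C_deriv_scal, (is_C_deriv_div (fun y => g1 y * g2 y - 1)%C); auto using s_neq0.
    replace (C_derive g1 z * g2 z + g1 z * C_derive g2 z)%C
      with (C_derive g1 z * g2 z + g1 z * C_derive g2 z - 0)%C by ring.
    apply is_C_deriv_minus; [apply is_C_deriv_mult | apply is_C_deriv_const]; assumption.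
  - apply is_C_deriv_scal, (is_C_deriv_div (fun y => g1 y + g2 y)%C); auto using s_neq0.
    apply is_C_deriv_plus; assumption.
  - apply is_C_deriv_scal, (is_C_deriv_div (fun y => g1 y - g2 y)%C); auto using s_neq0.
    apply is_C_deriv_minus; assumption.
Qed.

Lemma xu_Phi (u v : R) (k : nat) : (k < 4)%nat -> D (u, v) ->
  xu x u v k = Re (Phi g1 g2 s k (u, v)).
Proof.
  intros Hk Huv. apply is_derive_unique.
  exact (proj1 (is_C_deriv_partial_u _ _ _ _ (Psi_primitive k _ Hk Huv))).
Qed.

Lemma xv_Phi (u v : R) (k : nat) : (k < 4)%nat -> D (u, v) ->
  xv x u v k = - Im (Phi g1 g2 s k (u, v)).
Proof.
  intros Hk Huv. apply is_derive_unique.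
  exact (proj1 (is_C_deriv_partial_v _ _ _ _ (Psi_primitive k _ Hk Huv))).
Qed.

Section At_point.

Variables (u v : R) (k : nat).
Hypotheses (Hk : (k < 4)%nat) (Huv : D (u, v)).
Local Notation z := ((u, v) : C).

Lemma is_derive_xu_u : is_derive (fun t => xu x t v k) u (Re (dPhi g1 g2 s k z)).
Proof.
  apply is_derive_ext_loc with (fun t => Re (Phi g1 g2 s k (t, v))).
  - apply (filter_imp _ _ (fun t Ht => eq_sym (xu_Phi t v k Hk Ht))), open_C_slices; assumption.
  - exact (proj1 (is_C_deriv_partial_u _ _ _ _ (is_C_deriv_Phi k z Hk Huv))).
Qed.

Lemma is_derive_xu_v : is_derive (fun t => xu x u t k) v (- Im (dPhi g1 g2 s k z)).
Proof.
  apply is_derive_ext_loc with (fun t => Re (Phi g1 g2 s k (u, t))).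
  - apply (filter_imp _ _ (fun t Ht => eq_sym (xu_Phi u t k Hk Ht))), open_C_slices; assumption.
  - exact (proj1 (is_C_deriv_partial_v _ _ _ _ (is_C_deriv_Phi k z Hk Huv))).
Qed.

Lemma is_derive_xv_u : is_derive (fun t => xv x t v k) u (- Im (dPhi g1 g2 s k z)).
Proof.
  apply is_derive_ext_loc with (fun t => - Im (Phi g1 g2 s k (t, v))).
  - apply (filter_imp _ _ (fun t Ht => eq_sym (xv_Phi t v k Hk Ht))), open_C_slices; assumption.
  - apply (is_derive_opp (fun t => Im (Phi g1 g2 s k (t, v)))).
    exact (proj2 (is_C_deriv_partial_u _ _ _ _ (is_C_deriv_Phi k z Hk Huv))).
Qed.

Lemma is_derive_xv_v : is_derive (fun t => xv x u t k) v (- Re (dPhi g1 g2 s k z)).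
Proof.
  apply is_derive_ext_loc with (fun t => - Im (Phi g1 g2 s k (u, t))).
  - apply (filter_imp _ _ (fun t Ht => eq_sym (xv_Phi u t k Hk Ht))), open_C_slices; assumption.
  - apply (is_derive_opp (fun t => Im (Phi g1 g2 s k (u, t)))).
    exact (proj2 (is_C_deriv_partial_v _ _ _ _ (is_C_deriv_Phi k z Hk Huv))).
Qed.

Lemma xz_Phi : xz x u v k = Phi g1 g2 s k z.
Proof.
  unfold xz. rewrite xu_Phi, xv_Phi, Ropp_involutive by assumption.
  symmetry. apply surjective_pairing.
Qed.

Lemma xzu_dPhi : xzu x u v k = dPhi g1 g2 s k z.
Proof.
  unfold xzu.
  replace (xuu x u v k) with (Re (dPhi g1 g2 s k z))
    by (symmetry; exact (is_derive_unique _ _ _ is_derive_xu_u)).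
  replace (xuv x u v k) with (- Im (dPhi g1 g2 s k z))
    by (symmetry; exact (is_derive_unique _ _ _ is_derive_xu_v)).
  rewrite Ropp_involutive. symmetry. apply surjective_pairing.
Qed.

Lemma xvv_xuu : xvv x u v k = - xuu x u v k.
Proof.
  transitivity (- Re (dPhi g1 g2 s k z)); [exact (is_derive_unique _ _ _ is_derive_xv_v) |].
  f_equal. symmetry. exact (is_derive_unique _ _ _ is_derive_xu_u).
Qed.

Lemma weierstrass_ex_derive :
  ex_derive (fun t => x t v k) u /\ ex_derive (fun t => x u t k) v /\
  ex_derive (fun t => xu x t v k) u /\ ex_derive (fun t => xu x u t k) v /\
  ex_derive (fun t => xv x t v k) u /\ ex_derive (fun t => xv x u t k) v.
Proof.
  repeat split; eexists.
  - exact (proj1 (is_C_deriv_partial_u _ _ _ _ (Psi_primitive k z Hk Huv))).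
  - exact (proj1 (is_C_deriv_partial_v _ _ _ _ (Psi_primitive k z Hk Huv))).
  - exact is_derive_xu_u.
  - exact is_derive_xu_v.
  - exact is_derive_xv_u.
  - exact is_derive_xv_v.
Qed.

End At_point.

Lemma weierstrass_normalized (u v : R) : D (u, v) -> normalized_at x u v.
Proof.
  intros Huv. pose proof (s_neq0 _ Huv) as Hs.
  assert (HPhi : forall k, (k < 4)%nat -> xz x u v k = Phi g1 g2 s k (u, v))
    by (intros; apply xz_Phi; assumption).
  assert (HdPhi : forall k, (k < 4)%nat -> xzu x u v k = dPhi g1 g2 s k (u, v))
    by (intros; apply xzu_dPhi; assumption).
  repeat split.
  - rewrite (cdot_ext _ _ _ _ HPhi HPhi). exact (cdot_Phi_Phi g1 g2 s _ Hs).
  - destruct (Phi_neq0 g1 g2 s _ Hs) as [k [Hk Hnz]].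
    exists k. split; [exact Hk |]. now rewrite HPhi.
  - rewrite (cdot_ext _ _ _ _ HPhi HdPhi). exact (cdot_Phi_dPhi g1 g2 s _ Hs).
  - rewrite (cdot_ext _ _ _ _ HdPhi HdPhi). exact (cdot_dPhi_dPhi g1 g2 s _ Hs (s_sqr _ Huv)).
  - intros k Hk. apply xvv_xuu; assumption.
Qed.

End Weierstrass_representation.

Theorem mainTheorem4 (D : C -> Prop) (g1 g2 s : C -> C) (Psi : nat -> C -> C) :
  is_domain D ->
  holo_on D g1 -> holo_on D g2 ->
  (forall z, D z -> (C_derive g1 z * C_derive g2 z)%C <> 0%C) ->
  holo_on D s ->
  (forall z, D z -> (s z * s z)%C = (C_derive g1 z * C_derive g2 z)%C) ->
  (forall k z, (k < 4)%nat -> D z -> is_C_deriv (Psi k) z (Phi g1 g2 s k z)) ->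
  let x : surf := fun u v k => Re (Psi k (u, v)) in
  general_type x (fun u v => D (u, v)) /\
  canonical_first_type x (fun u v => D (u, v)).
Proof.
  intros [D_open _] Hg1 Hg2 Hg12 Hs Hss HPsi. cbv zeta.
  pose proof (weierstrass_ex_derive D g1 g2 s Psi D_open Hg1 Hg2 Hs Hg12 Hss HPsi) as Hder.
  pose proof (weierstrass_normalized D g1 g2 s Psi D_open Hg1 Hg2 Hs Hg12 Hss HPsi) as Hnorm.
  split; [split; [split; [split |] |] |].
  - apply (open_ext D); [intros [a b]; reflexivity | exact D_open].
  - intros u v Huv. split.
    + intros k Hk. now apply Hder.
    + apply normalized_independent, Hnorm, Huv.
  - intros u v Huv. apply normalized_meanH, Hnorm, Huv.
  - intros u v Huv. apply normalized_not_superconformal, Hnorm, Huv.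
  - intros u v Huv. specialize (Hnorm u v Huv).
    destruct (normalized_conformal _ _ _ Hnorm) as [HEG HF].
    split; [| split; [| split]]; trivial.
    + apply normalized_sigma_orth, Hnorm.
    + apply normalized_sigma_gap, Hnorm.
Qed.
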